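(* Let $q\ge 2$ and let $n,m$ be integers with $n/2\le m\le n$ and \[ \binom{2n-2m}{n-m}2^{2m-n}\le\binom{n}{m}q^{n-m}. \] Then for every integer $B\ge1$, the block communication scheme described in the context allows the receiver to recover the messages $w_1,w_2\in[q]^{Bm}$ of the two senders perfectly (with zero error) through at most $Bn+n-m+\lceil\log_q\binom nm\rceil$ uses of the two-user union channel with complete feedback. In particular, $R(\mathcal{O}_f)\ge R$, where $R$ is the solution in $(1/2,1]$ of $H_b(\alpha)+(1-\alpha)\log_2 q=1$, with $H_b(\alpha)=-\alpha\log_2\alpha-(1-\alpha)\log_2(1-\alpha)$ the binary entropy function.
   Context: The two-user union channel with input alphabet $[q]$ takes $x_1,x_2\in[q]$ and outputs $\{x_1,x_2\}$; with complete feedback, both senders see all previous channel outputs. An $(M_1,M_2,N,0)$ code with complete feedback consists of encoders $e_{ik}\colon[M_i]\times\mathcal{Y}^{k-1}\to[q]$ ($i=1,2$, $k\le N$, $\mathcal{Y}=\{y\subseteq[q]:|y|\in\{1,2\}\}$) and a decoder that recovers $(w_1,w_2)$ from the outputs $y_k=\{e_{1k}(w_1,y_{<k}),e_{2k}(w_2,y_{<k})\}$ without error for all messages. The zero-error capacity region $\mathcal{O}_f$ is the closure of $\{(R_1,R_2): NR_1\le\log_q M_1, NR_2\le\log_q M_2\text{ for some }(M_1,M_2,N,0)\text{ code}\}$, and $R(\mathcal{O}_f)=\sup\{\frac12(R_1+R_2):(R_1,R_2)\in\mathcal{O}_f\}$. The scheme: messages $w_1,w_2\in[q]^{Bm}$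 with digits $w_{1i},w_{2i}$. Let $S=\{(s_1,\dots,s_n): s_k\in\{*\}\cup[q],\ |\{k:s_k=*\}|=m\}$, so $|S|=\binom nm q^{n-m}$. After block $b$ ($0\le b\le B$), $U(b)\subseteq([q]\times[q])^{bm}$ is the set of candidate values of $((w_{1i},w_{2i}))_{i=1}^{bm}$ consistent with all outputs so far ($U(0)$ contains only the empty sequence), and both senders know $((w_{1i},w_{2i}))_{i=1}^{bm}$. In block $b+1$ ($b<B$, length $n$), the elements of $U(b)$ are injectively indexed by elements of $S$ via a rule fixed in advance (e.g. lexicographic orders, provided $|U(b)|\le|S|$); let $(s_1,\dots,s_n)$ be the index of the true value. At the $k$-th use, if $s_k\in[q]$ both senders send $s_k$; if $s_k$ is the $i$-th star, sender 1 sends $w_{1,bm+i}$ and sender 2 sends $w_{2,bm+i}$ (by feedback each then learns the other's digit). In the final block $B+1$, the senders resolve the remaining uncertainty $U(B)$ using $\lceil\log_q|U(B)|\rceil$ channel uses. *)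

From Stdlib Require Import Reals.
From mathcomp Require Import all_boot.

Set Implicit Arguments. Unset Strict Implicit. Unset Printing Implicit Defensive.

Section Union.
Variable q : nat.
Local Open Scope R_scope.

Definition dpair := ('I_q * 'I_q)%type.
(** channel output alphabet: subsets of [q] (of size 1 or 2) *)
Definition out := {set 'I_q}.
Definition union_out (x1 x2 : 'I_q) : out := [set x1; x2].

(** Encoder [e k w p] is the input at use number [k.+1] (k < N), given the
    message [w] and the previous outputs [p] (a sequence of length k). *)
Fixpoint outs (M1 M2 : nat) (e1 : nat -> 'I_M1 -> seq out -> 'I_q)
  (e2 : nat -> 'I_M2 -> seq out -> 'I_q) (k : nat) (w1 : 'I_M1) (w2 : 'I_M2)
  : seq out :=
  match k with
  | 0 => [::]
  | k'.+1 => let p := outs e1 e2 k' w1 w2 in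
             rcons p (union_out (e1 k' w1 p) (e2 k' w2 p))
  end.

Definition fb_code (M1 M2 N : nat) : Prop :=
  exists (e1 : nat -> 'I_M1 -> seq out -> 'I_q)
         (e2 : nat -> 'I_M2 -> seq out -> 'I_q)
         (dec : seq out -> 'I_M1 * 'I_M2),
    forall w1 w2, dec (outs e1 e2 N w1 w2) = (w1, w2).

Definition logq (x : nat) : R := (ln (INR x) / ln (INR q)).

Definition achievable (R1 R2 : R) : Prop :=
  exists M1 M2 N : nat, (0 < N)%N /\ fb_code M1 M2 N /\
    (INR N * R1 <= logq M1) /\ (INR N * R2 <= logq M2).

Definition Of_region (R1 R2 : R) : Prop :=
  forall eps : R, (0 < eps) -> exists a b : R, achievable a b /\
    (Rabs (a - R1) < eps) /\ (Rabs (b - R2) < eps).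

Definition sum_rates (x : R) : Prop :=
  exists R1 R2 : R, Of_region R1 R2 /\ x = ((R1 + R2) / 2).

Definition ROf_ge (r : R) : Prop :=
  exists s : R, is_lub sum_rates s /\ (r <= s).

Fixpoint allseqs (k : nat) : seq (seq dpair) :=
  match k with
  | 0 => [:: [::]]
  | k'.+1 => [seq x :: s | x <- enum [set: dpair], s <- allseqs k']
  end.

Section Scheme.
Local Open Scope nat_scope.
Variables (n m : nat).

(** S: sequences of length n over {*} u [q] (None = star) with m stars *)
Definition inS (s : seq (option 'I_q)) : bool :=
  (size s == n) && (count (pred1 None) s == m).

(** outputs of one block of length n with index s and new digits d: at a
    non-star position both send s_k; at the i-th star, sender j sends the
    i-th new digit of w_j. *)
Fixpoint blk (s : seq (option 'I_q)) (d : seq dpair) : seq out :=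
  match s with
  | [::] => [::]
  | Some a :: s' => union_out a a :: blk s' d
  | None :: s' => match d with
                  | [::] => [::]
                  | x :: d' => union_out x.1 x.2 :: blk s' d'
                  end
  end.

(** the indexing rule fixed in advance: [rule b L x] is the index in S of
    the candidate x among the list L (= U(b)) in block b+1 *)
Variable rule : nat -> seq (seq dpair) -> seq dpair -> seq (option 'I_q).

Fixpoint tr (b : nat) : seq dpair -> seq out :=
  match b with
  | 0 => fun _ => [::]
  | b'.+1 => fun v =>
      let t := tr b' in
      t v ++ blk (rule b' [seq x <- allseqs (b' * m) | t x == t v]
                           (take (b' * m) v))
                 (take m (drop (b' * m) v))
  end.

(** U(b): the candidates for the first bm digit pairs consistent with the
    outputs of the first b blocks (enumerated in a canonical order) *)
Definition cand (b : nat) (v : seq dpair) : seq (seq dpair) :=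
  [seq x <- allseqs (b * m) | tr b x == tr b v].

(** final block: [frule L x] is a q-ary string of length ceil(log_q |L|)
    identifying x in L; both senders send it. *)
Variable frule : seq (seq dpair) -> seq dpair -> seq 'I_q.

Definition full (B : nat) (v : seq dpair) : seq out :=
  tr B v ++ [seq union_out a a | a <- frule (cand B v) (take (B * m) v)].

End Scheme.

Local Open Scope nat_scope.
Definition valid_rule (n m : nat)
  (rule : nat -> seq (seq dpair) -> seq dpair -> seq (option 'I_q)) : Prop :=
  forall b L, uniq L -> size L <= 'C(n, m) * q ^ (n - m) ->
    {in L &, injective (rule b L)} /\ {in L, forall x, inS n m (rule b L x)}.

Definition valid_frule (frule : seq (seq dpair) -> seq dpair -> seq 'I_q)
  : Prop :=
  forall L, uniq L ->
    {in L &, injective (frule L)} /\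
    {in L, forall x, size (frule L x) = up_log q (size L)}.

End Union.

Local Open Scope R_scope.
(** binary entropy (in bits); note 0 * ln 0 = 0 with Stdlib's ln *)
Definition Hb (a : R) : R :=
  (- (a * ln a / ln 2) - ((1 - a) * ln (1 - a) / ln 2)).

From Pilot Require Import Defs.
From Stdlib Require Import Reals Lra ZArith.
From mathcomp Require Import all_boot zify.

Set Implicit Arguments. Unset Strict Implicit. Unset Printing Implicit Defensive.

(* Within a block, a two-element output {a, b} can only come from a star and leaves the
   two digit pairs (a, b), (b, a), while a one-element output {a} comes either from a
   non-star sending a or from a star carrying (a, a).  So a block output with j two-element
   symbols has at most 'C(n - j, m - j) 2^j <= 'C(2n - 2m, n - m) 2^(2m - n) <= |S|
   preimages (index, new digits); since the previous candidates are indexed injectively,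
   this bounds the new candidates, the indexing of U(b) by S stays possible in every
   block, and the last block names the survivor of U(B) in base q.  Both senders can run
   the scheme because a sender who knows its own digit recovers the other's from the union.
   For the rate, 'C(n, m) q^(n - m) >= 2^(n (H_b(m/n) + (1 - m/n) log_2 q)) / (n + 1) exceeds
   2^n for large n when m / n is a rational just below the root R, and 2^n bounds the left
   side of the hypothesis; the rates B m / (B n + O(1)) then approach R. *)

Local Open Scope nat_scope.

Lemma nth_map_dflt (T1 T2 : Type) (f : T1 -> T2) x0 s i :
  f (nth x0 s i) = nth (f x0) (map f s) i.
Proof. by elim: s i => [|x s IH] [|i] //=. Qed.

Lemma up_log_mul_pow p a k : 1 < p -> up_log p (a * p ^ k) <= k + up_log p a.
Proof.
move=> p_gt1; apply: up_log_min => //.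
by rewrite expnD mulnC leq_mul2l up_logP ?orbT.
Qed.

Lemma inj_left_inv (T : finType) (U : eqType) (f : T -> U) :
  T -> injective f -> exists g : U -> T, cancel f g.
Proof.
move=> x0 f_inj; exists (fun y => odflt x0 [pick x | f x == y]) => x.
by case: pickP => [x' /eqP/f_inj|/(_ x)] //=; rewrite eqxx.
Qed.

Definition pad (T : Type) N (x0 : T) s := s ++ nseq (N - size s) x0.

Lemma size_pad (T : Type) N (x0 : T) s : size s <= N -> size (pad N x0 s) = N.
Proof. by move=> sN; rewrite size_cat size_nseq subnKC. Qed.

Lemma size_zip_tuple k (T1 T2 : Type) (w1 : k.-tuple T1) (w2 : k.-tuple T2) :
  size (zip w1 w2) = k.
Proof. by rewrite size_zip !size_tuple minnn. Qed.

Lemma zip_tuple_inj k (T1 T2 : Type) (w1 w1' : k.-tuple T1) (w2 w2' : k.-tuple T2) :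
  zip w1 w2 = zip w1' w2' -> (w1, w2) = (w1', w2').
Proof.
move=> E; congr pair; apply: val_inj.
  by have := congr1 unzip1 E; rewrite !unzip1_zip ?size_tuple.
by have := congr1 unzip2 E; rewrite !unzip2_zip ?size_tuple.
Qed.

Definition preimage_bound (N j k : nat) :=
  if j <= k then 'C(N - j, k - j) * 2 ^ j else 0.

Lemma preimage_boundSS N j k :
  preimage_bound N.+1 j.+1 k.+1 = 2 * preimage_bound N j k.
Proof. by rewrite /preimage_bound ltnS !subSS; case: ifP; rewrite // expnS mulnCA. Qed.

Lemma preimage_boundS0 N j : preimage_bound N.+1 j 0 = preimage_bound N j 0.
Proof. by rewrite /preimage_bound leqn0; case: eqP => // ->; rewrite !bin0. Qed.

Lemma preimage_boundS N j k : j <= N ->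
  preimage_bound N.+1 j k.+1 = preimage_bound N j k.+1 + preimage_bound N j k.
Proof.
rewrite /preimage_bound => jN; rewrite subSn //.
case: (ltngtP j k.+1) => [jk|kj|->]; rewrite ?subnn ?ltnn ?addn0 ?bin0 //.
- by rewrite -ltnS jk subSn // binS mulnDl.
- by rewrite leqNgt ltnW.
Qed.

Lemma bin_diag_ratio r j : j.+1 * 'C(r + j.+1, j.+1) = (r + j).+1 * 'C(r + j, j).
Proof. by rewrite -mul_bin_diag addnS. Qed.

Lemma leq_binS_double r j : r <= j.+1 -> 'C(r + j.+1, j.+1) <= 2 * 'C(r + j, j).
Proof.
move=> rj; rewrite -(@leq_pmul2l j.+1) // bin_diag_ratio mulnA leq_mul2r.
by apply/orP; right; lia.
Qed.

Lemma leq_double_binS r j : j < r -> 2 * 'C(r + j, j) <= 'C(r + j.+1, j.+1).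
Proof.
move=> jr; rewrite -(@leq_pmul2l j.+1) // bin_diag_ratio mulnA leq_mul2r.
by apply/orP; right; lia.
Qed.

(* j |-> 'C(r + j, j) / 2 ^ j increases up to j = r and decreases afterwards. *)
Lemma leq_bin_pow2_central r j : 'C(r + j, j) * 2 ^ r <= 'C(r + r, r) * 2 ^ j.
Proof.
have [rj|jr] := leqP r j.
  rewrite -(subnKC rj); elim: (j - r) => [|i IH]; first by rewrite addn0.
  have step := @leq_binS_double r (r + i) (leqW (leq_addr i r)).
  rewrite -addnS in step; apply: leq_trans (leq_mul step (leqnn _)) _.
  by rewrite addnS expnS -mulnA [in X in _ <= X]mulnCA leq_mul2l IH orbT.
suff down i j' : j' + i = r -> 'C(r + j', j') * 2 ^ r <= 'C(r + r, r) * 2 ^ j'.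
  by apply: (down (r - j)); rewrite subnKC // ltnW.
elim: i j' => [|i IH] j' Ej; first by rewrite -Ej addn0.
rewrite -(@leq_pmul2l 2) // mulnA.
apply: leq_trans (leq_mul (leq_double_binS (_ : j' < r)) (leqnn _)) _; first lia.
by rewrite mulnCA -expnS IH // addSnnS.
Qed.

Lemma preimage_bound_le n m j : m <= n -> n <= 2 * m ->
  preimage_bound n j m <= 'C(2 * n - 2 * m, n - m) * 2 ^ (2 * m - n).
Proof.
move=> mn nm; rewrite /preimage_bound; case: ifP => // jm.
set r := n - m; set i := m - j.
have -> : n - j = r + i by lia.
have -> : 2 * n - 2 * m = r + r by lia.
have -> : 2 * m - n = m - r by lia.
have -> : j = m - i by lia.
rewrite -(@leq_pmul2r (2 ^ (r + i))) ?expn_gt0 // -!mulnA -!expnD.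
have -> : m - i + (r + i) = r + m by lia.
have -> : m - r + (r + i) = i + m by lia.
by rewrite !expnD !mulnA leq_mul2r leq_bin_pow2_central orbT.
Qed.

Lemma leq_bin_exp2 N k : 'C(N, k) <= 2 ^ N.
Proof.
elim: N k => [|N IH] [|k] //; first by rewrite bin0 expn_gt0.
by rewrite binS expnS mul2n -addnn leq_add.
Qed.

Lemma preimage_max_le_pow2 n m : m <= n -> n <= 2 * m ->
  'C(2 * n - 2 * m, n - m) * 2 ^ (2 * m - n) <= 2 ^ n.
Proof.
move=> m_le_n n_le_2m; apply: leq_trans (leq_mul (leq_bin_exp2 _ _) (leqnn _)) _.
by rewrite -expnD leq_pexp2l //; lia.
Qed.

Section OneBlock.
Variable q : nat.

Lemma mem_allseqs k (x : seq (dpair q)) : (x \in allseqs q k) = (size x == k).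
Proof.
elim: k x => [|k IH] x /=; first by rewrite inE; case: x.
apply/allpairsP/idP => [[[a s]] /= [_ + ->]|]; first by rewrite IH.
case: x => [//|a s] /= Hs; exists (a, s); split => //.
  by rewrite mem_enum inE.
by rewrite IH.
Qed.

Lemma uniq_allseqs k : uniq (allseqs q k).
Proof.
elim: k => [|k IH] //=; apply: allpairs_uniq => //; first exact: enum_uniq.
by move=> [a s] [b t] _ _ /= [-> ->].
Qed.

Lemma union_out_eq (a b c d : 'I_q) : union_out a b = union_out c d ->
  (a = c /\ b = d) \/ (a = d /\ b = c).
Proof.
move=> E.
have Ha : a \in union_out c d by rewrite -E set21.
have Hb : b \in union_out c d by rewrite -E set22.
have Hc : c \in union_out a b by rewrite E set21.
have Hd : d \in union_out a b by rewrite E set22.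
by case/set2P: Hc Hd Ha Hb => <- /set2P[] <- /set2P[] ? /set2P[] ?; subst; tauto.
Qed.

Lemma union_out_diag_inj : injective (fun a : 'I_q => union_out a a).
Proof. by move=> a b /union_out_eq; tauto. Qed.

Lemma size_blk (s : seq (option 'I_q)) (d : seq (dpair q)) :
  count (pred1 None) s <= size d -> size (blk s d) = size s.
Proof. by elim: s d => [|[a|] s IH] [|x d] //= H; rewrite IH. Qed.

Lemma card_union_out_gt1 (a b : 'I_q) : (1 < #|union_out a b|) = (a != b).
Proof. by rewrite cards2 ltnS lt0b. Qed.

Definition union_pair (x : dpair q) : out q := union_out x.1 x.2.

Fixpoint blk_inputs (s : seq (option 'I_q)) (d : seq (dpair q)) : seq (dpair q) :=
  match s, d with
  | [::], _ => [::]
  | Some a :: s', _ => (a, a) :: blk_inputs s' d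
  | None :: s', [::] => [::]
  | None :: s', x :: d' => x :: blk_inputs s' d'
  end.

Lemma map_blk_inputs s d : map union_pair (blk_inputs s d) = blk s d.
Proof. by elim: s d => [|[a|] s IH] [|x d] //=; rewrite IH. Qed.

Lemma union_pair_inj_fst (x x' : dpair q) :
  x.1 = x'.1 -> union_pair x = union_pair x' -> x = x'.
Proof.
by case: x x' => [a b] [c d] /= ->; rewrite /union_pair /= => /union_out_eq[[_ ->]|[-> ->]].
Qed.

Lemma union_pair_inj_snd (x x' : dpair q) :
  x.2 = x'.2 -> union_pair x = union_pair x' -> x = x'.
Proof.
by case: x x' => [a b] [c d] /= ->; rewrite /union_pair /= => /union_out_eq[[-> _]|[-> ->]].
Qed.

Section Projection.
Variable proj : dpair q -> 'I_q.
Hypothesis proj_union_inj :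
  forall x x', proj x = proj x' -> union_pair x = union_pair x' -> x = x'.

Lemma map_proj_blk_inputs s d d' : map proj d = map proj d' ->
  map proj (blk_inputs s d) = map proj (blk_inputs s d').
Proof.
elim: s d d' => [|[a|] s IH] d d' //= E; first by rewrite (IH _ _ E).
by case: d d' E => [|x d] [|x' d'] //= [-> /IH->].
Qed.

(* Knowing its own digits, a sender recovers the other sender's digits from the outputs. *)
Lemma blk_inj_proj s d d' : map proj d = map proj d' -> blk s d = blk s d' ->
  size d = count (pred1 None) s -> size d' = count (pred1 None) s -> d = d'.
Proof.
elim: s d d' => [|[a|] s IH] d d' //= Ep Eb sd sd'.
- by case: d d' sd sd' {Ep Eb} => [|? ?] [|? ?].
- by case: Eb => Eb; apply: IH.
- case: d d' Ep Eb sd sd' => [|x d] [|x' d'] //= [Ex Ep] [Eu Eb] [sd] [sd'].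
  by rewrite (proj_union_inj Ex Eu) (IH _ _ Ep Eb).
Qed.

End Projection.

Fixpoint block_preimages (y : seq (out q)) (k : nat)
  : seq (seq (option 'I_q) * seq (dpair q)) :=
  match y with
  | [::] => if k == 0 then [:: ([::], [::])] else [::]
  | o :: y' =>
      [seq (Some a :: p.1, p.2) | a <- [seq a <- enum 'I_q | o == union_out a a],
                                  p <- block_preimages y' k] ++
      (if k is k'.+1 then
        [seq (None :: p.1, x :: p.2)
           | x <- [seq x <- enum [set: dpair q] | o == union_out x.1 x.2],
             p <- block_preimages y' k'] else [::])
  end.

Lemma mem_block_preimages s d : size d = count (pred1 None) s ->
  (s, d) \in block_preimages (blk s d) (count (pred1 None) s).
Proof.
elim: s d => [|[a|] s IH] d /=; first by case: d.
- rewrite add0n mem_cat => Hd; apply/orP; left; apply/allpairsP.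
  by exists (a, (s, d)); rewrite mem_filter eqxx mem_enum; split=> //; exact: IH.
- case: d => [|x d] //=; rewrite add1n mem_cat => -[Hd]; apply/orP; right.
  apply/allpairsP; exists (x, (s, d)); rewrite mem_filter eqxx mem_enum in_setT.
  by split=> //; exact: IH.
Qed.

Lemma size_diag_preimages (o : out q) :
  size [seq a <- enum 'I_q | o == union_out a a] <= ~~ (1 < #|o|).
Proof.
set s := [seq a <- _ | _]; case Hs: s => [|a s'] //; rewrite -Hs.
have : a \in s by rewrite Hs mem_head.
rewrite mem_filter => /andP[/eqP Ho _].
have sub : {subset s <= [:: a]}.
  move=> b; rewrite mem_filter Ho => /andP[/eqP E _].
  by rewrite (union_out_diag_inj E) mem_head.
rewrite Ho card_union_out_gt1 eqxx.
by apply: uniq_leq_size sub; rewrite filter_uniq ?enum_uniq.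
Qed.

Lemma size_pair_preimages (o : out q) :
  size [seq x <- enum [set: dpair q] | o == union_out x.1 x.2] <= (1 < #|o|).+1.
Proof.
set s := [seq x <- _ | _]; case Hs: s => [|[a b] s'] //; rewrite -Hs.
have Us : uniq s by rewrite filter_uniq ?enum_uniq.
have : (a, b) \in s by rewrite Hs mem_head.
rewrite mem_filter => /andP[/eqP /= Ho _]; rewrite Ho card_union_out_gt1.
have sub : {subset s <= [:: (a, b); (b, a)]}.
  move=> [c d]; rewrite mem_filter Ho /= => /andP[/eqP/union_out_eq E _].
  by rewrite !inE; case: E => -[-> ->]; rewrite eqxx ?orbT.
case: eqP => [Eab|_]; last exact: uniq_leq_size sub.
by apply: (@uniq_leq_size _ _ [:: (a, a)] Us) => x /sub; rewrite Eab !inE orbb.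
Qed.

Lemma size_block_preimages y k :
  size (block_preimages y k) <= preimage_bound (size y) (count (fun o : out q => 1 < #|o|) y) k.
Proof.
elim: y k => [|o y IH] k /=; first by case: k.
have jy : count (fun o : out q => 1 < #|o|) y <= size y by exact: count_size.
have D := size_diag_preimages o; have P := size_pair_preimages o.
rewrite size_cat size_allpairs; case: (1 < #|o|) D P => /= D P.
- move: D; rewrite leqn0 => /eqP->; case: k => [|k] //.
  by rewrite size_allpairs preimage_boundSS; exact: leq_mul.
- rewrite add0n; case: k => [|k].
    by rewrite addn0 preimage_boundS0 -[X in _ <= X]mul1n leq_mul.
  rewrite size_allpairs preimage_boundS //.
  by apply: leq_add; rewrite -[X in _ <= X]mul1n leq_mul.
Qed.

End OneBlock.

Section FeedbackSimulation.
Variables (q M1 M2 N : nat) (x0 : dpair q).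
Hypotheses (M1_gt0 : 0 < M1) (M2_gt0 : 0 < M2).
Variable F : 'I_M1 -> 'I_M2 -> seq (dpair q).
Hypothesis size_F : forall w1 w2, size (F w1 w2) = N.
Hypothesis map_F_inj : forall w1 w2 w1' w2',
  map (@union_pair q) (F w1 w2) = map (@union_pair q) (F w1' w2') -> (w1, w2) = (w1', w2').
Hypothesis F_causal1 : forall k w1 w2 w2',
  take k (map (@union_pair q) (F w1 w2)) = take k (map (@union_pair q) (F w1 w2')) ->
  (nth x0 (F w1 w2) k).1 = (nth x0 (F w1 w2') k).1.
Hypothesis F_causal2 : forall k w1 w1' w2,
  take k (map (@union_pair q) (F w1 w2)) = take k (map (@union_pair q) (F w1' w2)) ->
  (nth x0 (F w1 w2) k).2 = (nth x0 (F w1' w2) k).2.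

(* Each sender completes the past outputs with any message of the other sender consistent
   with them; by causality the choice does not matter. *)
Definition sim_enc1 k w1 (p : seq (out q)) : 'I_q :=
  if [pick w2 | take k (map (@union_pair q) (F w1 w2)) == p] is Some w2
  then (nth x0 (F w1 w2) k).1 else x0.1.

Definition sim_enc2 k w2 (p : seq (out q)) : 'I_q :=
  if [pick w1 | take k (map (@union_pair q) (F w1 w2)) == p] is Some w1
  then (nth x0 (F w1 w2) k).2 else x0.2.

Lemma outs_sim k w1 w2 : k <= N ->
  outs sim_enc1 sim_enc2 k w1 w2 = take k (map (@union_pair q) (F w1 w2)).
Proof.
elim: k => [|k IH] Hk /=; first by rewrite take0.
rewrite IH ?(ltnW Hk) // (take_nth (union_pair x0)) ?size_map ?size_F //.
rewrite (nth_map x0) ?size_F //; congr (rcons _ (union_out _ _)).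
- rewrite /sim_enc1; case: pickP => [w2' /eqP|/(_ w2)]; last by rewrite eqxx.
  exact: F_causal1.
- rewrite /sim_enc2; case: pickP => [w1' /eqP|/(_ w1)]; last by rewrite eqxx.
  exact: F_causal2.
Qed.

Lemma fb_code_of_causal : fb_code q M1 M2 N.
Proof.
have [dec decK] : exists dec, cancel (fun w => map (@union_pair q) (F w.1 w.2)) dec.
  apply: inj_left_inv => [|[w1 w2] [w1' w2'] /map_F_inj //].
  exact: (Ordinal M1_gt0, Ordinal M2_gt0).
exists sim_enc1, sim_enc2, dec => w1 w2.
by rewrite outs_sim // take_oversize ?size_map ?size_F // (decK (w1, w2)).
Qed.

End FeedbackSimulation.

Section Scheme.
Variables (q n m : nat).
Variable rule : nat -> seq (seq (dpair q)) -> seq (dpair q) -> seq (option 'I_q).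

Local Notation tr := (tr m rule).
Local Notation cand := (cand m rule).

Definition block_index b v := rule b (cand b v) (take (b * m) v).
Definition new_digits b (v : seq (dpair q)) := take m (drop (b * m) v).

Lemma trS b v : tr b.+1 v = tr b v ++ blk (block_index b v) (new_digits b v).
Proof. by []. Qed.

Lemma cand_tr b v v' : tr b v = tr b v' -> cand b v = cand b v'.
Proof. by rewrite /Defs.cand => ->. Qed.

Lemma take_mulSn b v : take (b.+1 * m) v = take (b * m) v ++ new_digits b v.
Proof. by rewrite mulSnr takeD. Qed.

Lemma leq_mulSnr b : b * m <= b.+1 * m.
Proof. by rewrite leq_mul2r leqnSn orbT. Qed.

Lemma size_new_digits b v : b.+1 * m <= size v -> size (new_digits b v) = m.
Proof. by rewrite mulSnr => Hv; rewrite size_takel // size_drop; lia. Qed.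

Lemma tr_take b v : tr b (take (b * m) v) = tr b v.
Proof.
elim: b v => [|b IH] v //.
have Eb : take (b * m) (take (b.+1 * m) v) = take (b * m) v.
  by rewrite take_takel // leq_mulSnr.
have Etr : tr b (take (b.+1 * m) v) = tr b v by rewrite -IH Eb IH.
have Ed : new_digits b (take (b.+1 * m) v) = new_digits b v.
  by rewrite /new_digits !take_drop take_takel // mulSnr addnC.
by rewrite !trS /block_index Etr (cand_tr Etr) Eb Ed.
Qed.

Lemma mem_cand b v x : (x \in cand b v) = (size x == b * m) && (tr b x == tr b v).
Proof. by rewrite /Defs.cand mem_filter mem_allseqs andbC. Qed.

Lemma uniq_cand b v : uniq (cand b v).
Proof. by rewrite /Defs.cand filter_uniq // uniq_allseqs. Qed.

Lemma take_mem_cand b v : b * m <= size v -> take (b * m) v \in cand b v.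
Proof. by move=> Hv; rewrite mem_cand size_takel // eqxx tr_take eqxx. Qed.

Hypothesis rule_valid : valid_rule n m rule.
Hypotheses (m_le_n : m <= n) (n_le_2m : n <= 2 * m).

Local Notation card_S := ('C(n, m) * q ^ (n - m)).
Local Notation preimage_max := ('C(2 * n - 2 * m, n - m) * 2 ^ (2 * m - n)).

Lemma block_index_inS b v : b * m <= size v -> size (cand b v) <= card_S ->
  inS n m (block_index b v).
Proof.
move=> Hv HL; have [_ ->] // := rule_valid b (uniq_cand b v) HL.
exact: take_mem_cand.
Qed.

Lemma size_trS b v : b.+1 * m <= size v -> size (cand b v) <= card_S ->
  size (tr b v) = b * n -> size (tr b.+1 v) = b.+1 * n.
Proof.
move=> Hv HL Htr.
have /andP[/eqP sS /eqP cS] := block_index_inS (leq_trans (leq_mulSnr b) Hv) HL.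
by rewrite trS size_cat Htr size_blk ?sS ?cS ?size_new_digits // mulSnr.
Qed.

(* A candidate after block b+1 is determined by its index in S and its new digits, which
   form a preimage of the output of block b+1. *)
Lemma cand_succ_le b v :
  (forall x, b * m <= size x -> size (tr b x) = b * n) ->
  b.+1 * m <= size v -> size (cand b v) <= card_S -> size (cand b.+1 v) <= preimage_max.
Proof.
move=> size_trb Hv HL.
have [injL inSL] := rule_valid b (uniq_cand b v) HL.
set y := blk (block_index b v) (new_digits b v).
pose phi x := (rule b (cand b v) (take (b * m) x), new_digits b x).
have candS x : x \in cand b.+1 v ->
    [/\ size x = b.+1 * m, take (b * m) x \in cand b v & blk (phi x).1 (phi x).2 = y].
  rewrite mem_cand => /andP[/eqP sx]; rewrite !trS.
  have sxb : b * m <= size x by rewrite sx leq_mulSnr.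
  rewrite eqseq_cat ?size_trb ?(leq_trans (leq_mulSnr b) Hv) //.
  case/andP=> /eqP Etr /eqP Eblk; split=> //.
    by rewrite mem_cand size_takel // eqxx tr_take Etr eqxx.
  by rewrite /y -Eblk /block_index (cand_tr Etr).
have phi_inj : {in cand b.+1 v &, injective phi}.
  move=> x x' /candS[sx Lx _] /candS[sx' Lx' _] [/(injL _ _ Lx Lx') Etake Edig].
  by rewrite -(take_size x) -(take_size x') sx sx' !take_mulSn Etake Edig.
have sub : {subset map phi (cand b.+1 v) <= block_preimages y m}.
  move=> _ /mapP[x /candS[sx Lx <-] ->].
  have /andP[_ /eqP cS] := inSL _ Lx.
  rewrite -[phi x]/((phi x).1, (phi x).2) -[X in block_preimages _ X]cS.
  apply: mem_block_preimages.
  by rewrite cS size_new_digits ?sx.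
have /andP[/eqP sS /eqP cS] := block_index_inS (leq_trans (leq_mulSnr b) Hv) HL.
have Uphi : uniq (map phi (cand b.+1 v)) by rewrite map_inj_in_uniq ?uniq_cand.
rewrite -(size_map phi); apply: leq_trans (uniq_leq_size Uphi sub) _.
apply: leq_trans (size_block_preimages _ _) _.
have -> : size y = n by rewrite size_blk ?sS // cS size_new_digits.
exact: preimage_bound_le.
Qed.

Hypothesis preimage_max_le : preimage_max <= card_S.

Lemma card_S_gt0 : 0 < card_S.
Proof.
by apply: leq_trans preimage_max_le; rewrite muln_gt0 bin_gt0 expn_gt0 /=; lia.
Qed.

Lemma scheme_invariant b v : b * m <= size v ->
  size (cand b v) <= card_S /\ size (tr b v) = b * n.
Proof.
elim: b v => [|b IH] v Hv; first by split=> //; exact: card_S_gt0.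
have [HL Htr] := IH v (leq_trans (leq_mulSnr b) Hv).
split; last exact: size_trS.
by apply: leq_trans preimage_max_le; apply: cand_succ_le => // x /IH[].
Qed.

Lemma cand_le_card_S b v : b * m <= size v -> size (cand b v) <= card_S.
Proof. by case/scheme_invariant. Qed.

Lemma size_tr b v : b * m <= size v -> size (tr b v) = b * n.
Proof. by case/scheme_invariant. Qed.

Lemma cand_le_preimage_max b v : b.+1 * m <= size v -> size (cand b.+1 v) <= preimage_max.
Proof.
move=> Hv; apply: cand_succ_le => //; first exact: size_tr.
exact/cand_le_card_S/(leq_trans (leq_mulSnr b) Hv).
Qed.

Variable frule : seq (seq (dpair q)) -> seq (dpair q) -> seq 'I_q.
Hypothesis frule_valid : valid_frule frule.

Local Notation full := (full m rule frule).

Lemma size_full B v : B * m <= size v ->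
  size (full B v) = B * n + up_log q (size (cand B v)).
Proof.
move=> Hv; rewrite /Defs.full size_cat size_tr // size_map.
by have [_ ->] := frule_valid (uniq_cand B v); last exact: take_mem_cand.
Qed.

Lemma full_inj B v v' : size v = B * m -> size v' = B * m -> full B v = full B v' -> v = v'.
Proof.
move=> sv sv' /eqP; rewrite /Defs.full eqseq_cat ?size_tr ?sv ?sv' //.
case/andP=> /eqP Etr /eqP; rewrite (cand_tr Etr) => /(inj_map (@union_out_diag_inj q)) Ef.
have [frule_inj _] := frule_valid (uniq_cand B v').
have Hv : take (B * m) v \in cand B v' by rewrite -(cand_tr Etr) take_mem_cand ?sv.
have Hv' : take (B * m) v' \in cand B v' by rewrite take_mem_cand ?sv'.
by move: (frule_inj _ _ Hv Hv' Ef); rewrite !take_oversize ?sv ?sv'.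
Qed.

Fixpoint tr_inputs b v : seq (dpair q) :=
  if b is b'.+1 then tr_inputs b' v ++ blk_inputs (block_index b' v) (new_digits b' v)
  else [::].

Lemma map_tr_inputs b v : map (@union_pair q) (tr_inputs b v) = tr b v.
Proof. by elim: b => [|b IH] //=; rewrite map_cat IH map_blk_inputs. Qed.

Lemma size_tr_inputs b v : b * m <= size v -> size (tr_inputs b v) = b * n.
Proof. by move=> Hv; rewrite -(size_map (@union_pair q)) map_tr_inputs size_tr. Qed.

Hypothesis q_gt1 : 1 < q.

Definition scheme_len B := B * n + (n - m) + up_log q 'C(n, m).

Lemma size_full_le B v : 0 < B -> size v = B * m -> size (full B v) <= scheme_len B.
Proof.
case: B => // B _ sv; rewrite /scheme_len size_full ?sv // -addnA leq_add2l.
have Hc := leq_trans (cand_le_preimage_max (_ : B.+1 * m <= size v)) preimage_max_le.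
by apply: leq_trans (leq_up_log q (Hc _)) _; rewrite ?sv ?up_log_mul_pow.
Qed.

Lemma full_decodable B : exists dec : seq (out q) -> (B * m).-tuple 'I_q * (B * m).-tuple 'I_q,
  forall w1 w2 : (B * m).-tuple 'I_q, dec (full B (zip w1 w2)) = (w1, w2).
Proof.
pose t0 := [tuple of nseq (B * m) (Ordinal (ltnW q_gt1))].
have full_zip_inj : injective (fun w : (B * m).-tuple 'I_q * (B * m).-tuple 'I_q =>
                                full B (zip w.1 w.2)).
  move=> [w1 w2] [w1' w2'] /= /full_inj.
  by rewrite !size_zip_tuple => /(_ erefl erefl)/zip_tuple_inj.
have [dec decK] := inj_left_inv (t0, t0) full_zip_inj.
by exists dec => w1 w2; rewrite (decK (w1, w2)).
Qed.

Definition final_inputs B v : seq (dpair q) :=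
  [seq (a, a) | a <- frule (cand B v) (take (B * m) v)].

Definition scheme_inputs x0 B v := pad (scheme_len B) x0 (tr_inputs B v ++ final_inputs B v).

Lemma map_scheme_outputs B v :
  map (@union_pair q) (tr_inputs B v ++ final_inputs B v) = full B v.
Proof. by rewrite map_cat map_tr_inputs -map_comp. Qed.

Lemma size_scheme_inputs x0 B v : 0 < B -> size v = B * m ->
  size (scheme_inputs x0 B v) = scheme_len B.
Proof.
move=> B_gt0 sv; rewrite size_pad // -(size_map (@union_pair q)) (map_scheme_outputs B v).
exact: size_full_le.
Qed.

Lemma scheme_inputs_inj x0 B v v' : size v = B * m -> size v' = B * m ->
  map (@union_pair q) (scheme_inputs x0 B v) = map (@union_pair q) (scheme_inputs x0 B v') ->
  v = v'.
Proof.
move=> sv sv'; rewrite /scheme_inputs /pad map_cat (map_scheme_outputs B v).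
rewrite map_cat (map_scheme_outputs B v') => E.
have Etr : tr B v = tr B v'.
  by move/(congr1 (take (B * n))): E; rewrite /Defs.full -!catA !take_size_cat ?size_tr ?sv ?sv'.
have Esize : size (full B v) = size (full B v') by rewrite !size_full ?sv ?sv' // (cand_tr Etr).
apply: full_inj sv sv' _.
by move/(congr1 (take (size (full B v)))): E; rewrite take_size_cat // Esize take_size_cat.
Qed.

Section Causality.
Variable proj : dpair q -> 'I_q.
Hypothesis proj_union_inj :
  forall x x', proj x = proj x' -> union_pair x = union_pair x' -> x = x'.

Lemma tr_prefix_inj b v v' : b * m <= size v -> size v = size v' ->
  map proj v = map proj v' -> tr b v = tr b v' -> take (b * m) v = take (b * m) v'.
Proof.
elim: b => [|b IH] Hv sv Ep; first by rewrite !take0.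
have Hvb := leq_trans (leq_mulSnr b) Hv.
rewrite !trS => /eqP; rewrite eqseq_cat ?size_tr -?sv //.
case/andP=> /eqP Etr /eqP; have Etake := IH Hvb sv Ep Etr.
rewrite /block_index -(cand_tr Etr) -Etake -/(block_index b v) => Eblk.
have /andP[_ /eqP cS] := block_index_inS Hvb (cand_le_card_S Hvb).
rewrite !take_mulSn Etake; congr (_ ++ _); apply: (blk_inj_proj proj_union_inj _ Eblk).
- by rewrite !map_take !map_drop Ep.
- by rewrite cS size_new_digits.
- by rewrite cS size_new_digits // -sv.
Qed.

Lemma tr_inputs_causal b k x0 v v' : b * m <= size v -> size v = size v' ->
  map proj v = map proj v' -> take k (tr b v) = take k (tr b v') ->
  proj (nth x0 (tr_inputs b v) k) = proj (nth x0 (tr_inputs b v') k).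
Proof.
elim: b k => [|b IH] k Hv sv Ep //.
have Hvb := leq_trans (leq_mulSnr b) Hv; have Hvb' : b * m <= size v' by rewrite -sv.
rewrite !trS /= !take_cat !nth_cat !size_tr_inputs // !size_tr //.
case: ltnP => Hk Et; first exact: IH.
move/eqP: Et; rewrite eqseq_cat ?size_tr // => /andP[/eqP Etr _].
rewrite /block_index -(cand_tr Etr) -(tr_prefix_inj Hvb sv Ep Etr) !(nth_map_dflt proj).
by rewrite (@map_proj_blk_inputs q proj _ _ (new_digits b v')) // !map_take !map_drop Ep.
Qed.

Lemma scheme_inputs_causal B k x0 v v' : size v = B * m -> size v' = B * m ->
  map proj v = map proj v' ->
  take k (map (@union_pair q) (scheme_inputs x0 B v)) =
    take k (map (@union_pair q) (scheme_inputs x0 B v')) ->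
  proj (nth x0 (scheme_inputs x0 B v) k) = proj (nth x0 (scheme_inputs x0 B v') k).
Proof.
move=> sv sv' Ep; have svv : size v = size v' by rewrite sv sv'.
rewrite /scheme_inputs /pad -!catA !map_cat !map_tr_inputs.
have [Hk|Hk] := ltnP k (B * n).
  rewrite !take_cat !nth_cat !size_tr_inputs ?size_tr ?sv ?sv' // Hk.
  by apply: tr_inputs_causal; rewrite ?sv.
move/(congr1 (take (B * n))); rewrite !take_takel // !take_size_cat ?size_tr ?sv ?sv' // => Etr.
by have := tr_prefix_inj (_ : B * m <= size v) svv Ep Etr; rewrite !take_oversize ?sv ?sv' // => ->.
Qed.

End Causality.

Lemma scheme_fb_code B : 0 < B -> fb_code q (q ^ (B * m)) (q ^ (B * m)) (scheme_len B).
Proof.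
move=> B_gt0; have q_gt0 : 0 < q := ltnW q_gt1.
have M_gt0 : 0 < q ^ (B * m) by rewrite expn_gt0 q_gt0.
have card_msg : #|{: (B * m).-tuple 'I_q}| = q ^ (B * m) by rewrite card_tuple card_ord.
pose msg (i : 'I_(q ^ (B * m))) := enum_val (cast_ord (esym card_msg) i).
have msg_inj : injective msg by move=> i j /enum_val_inj/cast_ord_inj.
pose x0 : dpair q := (Ordinal q_gt0, Ordinal q_gt0).
apply: (@fb_code_of_causal _ _ _ _ x0 M_gt0 M_gt0
          (fun i1 i2 => scheme_inputs x0 B (zip (msg i1) (msg i2)))).
- by move=> i1 i2; rewrite size_scheme_inputs ?size_zip_tuple.
- move=> i1 i2 i1' i2' /scheme_inputs_inj.
  by rewrite !size_zip_tuple => /(_ erefl erefl)/zip_tuple_inj[/msg_inj-> /msg_inj->].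
- by move=> k i1 i2 i2'; apply: (scheme_inputs_causal (@union_pair_inj_fst q));
    rewrite ?size_zip_tuple // -!/(unzip1 _) !unzip1_zip ?size_tuple.
- by move=> k i1 i1' i2; apply: (scheme_inputs_causal (@union_pair_inj_snd q));
    rewrite ?size_zip_tuple // -!/(unzip2 _) !unzip2_zip ?size_tuple.
Qed.

End Scheme.

Section IndexingRules.
Variable q : nat.

Fixpoint enumS (n m : nat) : seq (seq (option 'I_q)) :=
  match n with
  | 0 => if m == 0 then [:: [::]] else [::]
  | n'.+1 => (if m is m'.+1 then [seq None :: s | s <- enumS n' m'] else [::]) ++
             [seq Some a :: s | a <- enum 'I_q, s <- enumS n' m]
  end.

Lemma enumS_inS n m s : s \in enumS n m -> inS n m s.
Proof.
rewrite /inS; elim: n m s => [|n IH] m s /=.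
  by case: m => [|m] //=; rewrite inE => /eqP ->.
rewrite mem_cat => /orP[].
  by case: m => [|m] //= /mapP[s' /IH/andP[/eqP ss /eqP cs] ->] /=; rewrite ss cs add1n !eqxx.
by case/allpairsP=> -[a s'] /= [_ /IH/andP[/eqP ss /eqP cs] ->] /=; rewrite ss cs add0n !eqxx.
Qed.

Lemma uniq_enumS n m : uniq (enumS n m).
Proof.
elim: n m => [|n IH] m /=; first by case: (m == 0).
rewrite cat_uniq; apply/and3P; split.
- by case: m => [|m] //; rewrite map_inj_uniq // => s t [].
- apply/hasPn => _ /allpairsP[[a s] /= [_ _ ->]].
  by case: m => [|m] //; apply/negP => /mapP[].
- apply: allpairs_uniq => //; first exact: enum_uniq.
  by move=> [a s] [b t] _ _ /= [-> ->].
Qed.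

Lemma size_enumS n m : size (enumS n m) = 'C(n, m) * q ^ (n - m).
Proof.
elim: n m => [|n IH] m /=; first by case: m.
rewrite size_cat size_allpairs size_enum_ord.
case: m => [|m]; first by rewrite IH /= !subn0 bin0 !mul1n expnS.
rewrite size_map !IH binS mulnDl addnC subSS; congr (_ + _).
have [lt_mn|le_nm] := ltnP m n; last by rewrite bin_small ?muln0 //; lia.
by rewrite -(subnSK lt_mn) expnS mulnCA.
Qed.

Definition index_rule n m (b : nat) (L : seq (seq (dpair q))) (x : seq (dpair q)) :=
  nth [::] (enumS n m) (index x L).

Lemma index_rule_valid n m : valid_rule n m (index_rule n m).
Proof.
move=> b L uL; rewrite -size_enumS => sL.
have Lidx x : x \in L -> index x L < size (enumS n m).
  by move=> Lx; apply: leq_trans sL; rewrite index_mem.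
split=> [x y Lx Ly /eqP|x Lx]; last exact/enumS_inS/mem_nth/Lidx.
rewrite /index_rule nth_uniq ?uniq_enumS ?Lidx // => /eqP Eidx.
by rewrite -(nth_index x Lx) Eidx nth_index.
Qed.

Hypothesis q_gt1 : 1 < q.
Let q_gt0 : 0 < q := ltnW q_gt1.

Fixpoint digits (k i : nat) : seq 'I_q :=
  if k is k'.+1 then Ordinal (ltn_pmod i q_gt0) :: digits k' (i %/ q) else [::].

Lemma size_digits k i : size (digits k i) = k.
Proof. by elim: k i => [|k IH] i //=; rewrite IH. Qed.

Lemma digits_inj k i j : i < q ^ k -> j < q ^ k -> digits k i = digits k j -> i = j.
Proof.
elim: k i j => [|k IH] i j /=; first by rewrite !ltnS !leqn0 => /eqP-> /eqP->.
move=> lt_i lt_j [Emod /IH Ediv].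
by rewrite (divn_eq i q) (divn_eq j q) Ediv ?Emod // ltn_divLR // -expnSr.
Qed.

Definition digits_rule (L : seq (seq (dpair q))) (x : seq (dpair q)) : seq 'I_q :=
  digits (up_log q (size L)) (index x L).

Lemma digits_rule_valid : valid_frule digits_rule.
Proof.
move=> L uL; split=> [x y Lx Ly /digits_inj Eidx|x _]; last exact: size_digits.
have Lidx z : z \in L -> index z L < q ^ up_log q (size L).
  by move=> Lz; apply: leq_trans (up_logP _ q_gt1); rewrite index_mem.
by rewrite -(nth_index x Lx) Eidx ?Lidx // nth_index.
Qed.

End IndexingRules.

Local Open Scope R_scope.

Lemma INR_expn a k : INR (a ^ k)%N = INR a ^ k.
Proof. by elim: k => [|k IH]; rewrite ?expn0 // expnS mult_INR IH. Qed.

Lemma factE k : (k`!)%N = fact k.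
Proof. by elim: k => [|k IH] //; rewrite factS IH. Qed.

Lemma INR_bin n k : (k <= n)%N -> INR 'C(n, k) = Binomial.C n k.
Proof.
move=> le_kn; rewrite /Binomial.C.
have := congr1 INR (bin_fact le_kn); rewrite !mult_INR !factE => <-.
have := INR_fact_neq_0 k; have := INR_fact_neq_0 (n - k).
by change (n - k)%coq_nat with (n - k)%N => ? ?; field.
Qed.

Lemma ln_nat_gt0 k : (1 < k)%N -> 0 < ln (INR k).
Proof.
by move=> k_gt1; rewrite -ln_1; apply: ln_increasing; [lra|apply: (lt_INR 1); apply/ltP].
Qed.

Section BinomialMode.
Variables (n m : nat) (a : R).
Hypotheses (m_le_n : (m <= n)%N) (a_01 : 0 < a < 1) (m_eq : INR m = a * INR n).

Let T k := INR 'C(n, k) * a ^ k * (1 - a) ^ (n - k).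

Let T_ge0 k : 0 <= T k.
Proof. by apply: Rmult_le_pos; [apply: Rmult_le_pos|]; [apply: pos_INR|apply: pow_le..]; lra. Qed.

Let T_sum : sum_f_R0 T n = 1.
Proof.
have := Binomial.binomial a (1 - a) n; rewrite (_ : a + (1 - a) = 1); last by ring.
rewrite pow1 => ->; apply: PartSum.sum_eq => k /leP le_kn.
by rewrite /T INR_bin.
Qed.

Let T_ratio k : (k < n)%N -> T k.+1 * (INR k.+1 * (1 - a)) = T k * (INR (n - k) * a).
Proof.
move=> lt_kn; rewrite /T (_ : (n - k = (n - k.+1).+1)%N); last by lia.
have := congr1 INR (mul_bin_left n k); rewrite !mult_INR => Ebin.
rewrite (_ : INR (n - k.+1).+1 = INR (n - k)); last by congr INR; lia.
rewrite -!tech_pow_Rmult.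
transitivity (INR k.+1 * INR 'C(n, k.+1) * (a * a ^ k * (1 - a) ^ (n - k.+1) * (1 - a))).
  by ring.
by rewrite Ebin; ring.
Qed.

Let T_step k : (k < n)%N -> if (k < m)%N then T k <= T k.+1 else T k.+1 <= T k.
Proof.
move=> lt_kn; have E := T_ratio lt_kn.
have pos : 0 < INR k.+1 * (1 - a) by apply: Rmult_lt_0_compat; [apply: lt_0_INR; lia|lra].
have Hk : INR (n - k) = INR n - INR k by rewrite minus_INR //; apply/leP; lia.
rewrite S_INR in pos E *; rewrite Hk in E.
case: ltnP => [/leP/le_INR|/leP/le_INR]; rewrite ?S_INR => Hkm.
  apply: (Rmult_le_reg_r _ _ _ pos); rewrite E; apply: Rmult_le_compat_l; [exact: T_ge0|nra].
apply: (Rmult_le_reg_r _ _ _ pos); rewrite E; apply: Rmult_le_compat_l; [exact: T_ge0|nra].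
Qed.

Let T_max k : (k <= n)%N -> T k <= T m.
Proof.
move=> le_kn.
have up j : (j < m)%N -> T j <= T j.+1.
  by move=> lt_jm; have := T_step (leq_trans lt_jm m_le_n); rewrite lt_jm.
have down j : (m <= j)%N -> (j < n)%N -> T j.+1 <= T j.
  by move=> le_mj lt_jn; have := T_step lt_jn; rewrite ltnNge le_mj.
have [le_km|lt_mk] := leqP k m.
  rewrite -(subKn le_km); elim: (m - k)%N (leq_subr k m) => [|i IH] lt_im.
    by rewrite subn0; lra.
  by apply: Rle_trans (IH (ltnW lt_im)); rewrite -(subnSK lt_im); apply: up; lia.
rewrite -(subnKC (ltnW lt_mk)); elim: (k - m)%N (leq_sub2r m le_kn) => [|i IH] lt_in.
  by rewrite addn0; lra.
by apply: Rle_trans (IH (ltnW lt_in)); rewrite addnS; apply: down; lia.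
Qed.

Lemma bin_mode_ge : 1 <= (INR n + 1) * (INR 'C(n, m) * a ^ m * (1 - a) ^ (n - m)).
Proof.
have := sum_Rle T (fun _ => T m) n (fun k le_kn => T_max (introT leP le_kn)).
by rewrite T_sum sum_cte S_INR Rmult_comm.
Qed.

End BinomialMode.

Lemma ln_le x y : 0 < x -> x <= y -> ln x <= ln y.
Proof. by move=> x_gt0 [lt|<-]; [left; apply: ln_increasing|right]. Qed.

Lemma ln_le_inv x y : 0 < x -> 0 < y -> ln x <= ln y -> x <= y.
Proof. by move=> x_gt0 y_gt0 Hln; apply: Rnot_lt_le => /(ln_increasing _ _ y_gt0); lra. Qed.

Lemma ln_le_sub x y : 0 < x -> 0 < y -> y * ln x - y * ln y <= x - y.
Proof.
move=> x_gt0 y_gt0; have := exp_ineq1_le (ln x - ln y).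
rewrite /Rminus exp_plus exp_Ropp !exp_ln // => H.
have : y * (1 + (ln x + - ln y)) <= y * (x * / y) by apply: Rmult_le_compat_l; lra.
by rewrite (_ : y * (x * / y) = x); [lra | field; lra].
Qed.

Definition neg_entropy (x : R) := x * ln x + (1 - x) * ln (1 - x).

Lemma neg_entropy_le x y : / 2 <= x -> x <= y -> y < 1 -> neg_entropy x <= neg_entropy y.
Proof.
move=> x_ge x_le_y y_lt1; rewrite /neg_entropy.
have H1 : y * ln x - y * ln y <= x - y by apply: ln_le_sub; lra.
have H2 : (1 - y) * ln (1 - x) - (1 - y) * ln (1 - y) <= (1 - x) - (1 - y).
  by apply: ln_le_sub; lra.
have Hln : ln (1 - x) <= ln x by apply: ln_le; lra.
have : 0 <= (y - x) * (ln x - ln (1 - x)) by apply: Rmult_le_pos; lra.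
nra.
Qed.

(* ln 2 * (H_b x + (1 - x) log_2 q): up to o(1), (ln |S|) / n when m = x n *)
Definition card_S_exponent (q : nat) (x : R) := - neg_entropy x + (1 - x) * ln (INR q).

Lemma card_S_exponent_lt q x y : (1 < q)%N -> / 2 <= x -> x < y -> y < 1 ->
  card_S_exponent q y < card_S_exponent q x.
Proof.
move=> q_gt1 x_ge x_lt_y y_lt1; rewrite /card_S_exponent.
have := neg_entropy_le x_ge (Rlt_le _ _ x_lt_y) y_lt1; have := ln_nat_gt0 q_gt1; nra.
Qed.

Lemma pow2_le_card_S q n m a : (0 < q)%N -> (m <= n)%N -> 0 < a < 1 -> INR m = a * INR n ->
  ln (INR n + 1) <= INR n * (card_S_exponent q a - ln 2) ->
  (2 ^ n <= 'C(n, m) * q ^ (n - m))%N.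
Proof.
move=> q_gt0 m_le_n a_01 m_eq Hln; apply/leP/INR_le; rewrite mult_INR !INR_expn.
have q_pos : 0 < INR q by apply: lt_0_INR; apply/ltP.
have nm_eq : INR (n - m) = (1 - a) * INR n by rewrite minus_INR; [lra|apply/leP].
have n1_pos : 0 < INR n + 1 by have := pos_INR n; lra.
have am_pos : 0 < a ^ m by apply: pow_lt; lra.
have bm_pos : 0 < (1 - a) ^ (n - m) by apply: pow_lt; lra.
have pow2_pos : 0 < 2 ^ n by apply: pow_lt; lra.
set P := (INR n + 1) * 2 ^ n * a ^ m * (1 - a) ^ (n - m).
have P_pos : 0 < P by rewrite /P; repeat apply: Rmult_lt_0_compat.
(* ln P = ln (n + 1) + n (ln 2 + neg_entropy a) <= (n - m) ln q *)
have P_le : P <= INR q ^ (n - m).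
  apply: ln_le_inv => //; first exact: pow_lt.
  rewrite /P !ln_mult ?ln_pow //; try lra; try (repeat apply: Rmult_lt_0_compat => //).
  by rewrite m_eq nm_eq; move: Hln; rewrite /card_S_exponent /neg_entropy; nra.
have := Rmult_le_compat_l _ _ _ (Rlt_le _ _ pow2_pos) (bin_mode_ge m_le_n a_01 m_eq).
rewrite Rmult_1_r (_ : _ * (_ * _) = INR 'C(n, m) * P); last by rewrite /P; ring.
by move/Rle_trans; apply; apply: Rmult_le_compat_l => //; apply: pos_INR.
Qed.

Lemma exists_nat_between y : 0 <= y -> exists a : nat, y < INR a <= y + 1.
Proof.
move=> y_ge0; have [up_gt up_le] := archimed y.
have up_ge0 : (0 <= up y)%Z by apply: le_IZR; lra.
by exists (Z.to_nat (up y)); rewrite INR_IZR_INZ Z2Nat.id //; lra.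
Qed.

Lemma exists_ratio_between x y : 0 <= x < y ->
  exists a c : nat, (0 < c)%N /\ x < INR a / INR c < y.
Proof.
move=> [x_ge0 x_lt_y]; have [c Hc] := INR_archimed (y - x) 1 ltac:(lra).
have c_pos : 0 < INR c by have := pos_INR c; nra.
have [a [a_gt a_le]] := exists_nat_between (Rmult_le_pos _ _ x_ge0 (Rlt_le _ _ c_pos)).
exists a, c; split; first by apply/ltP/INR_lt.
by split; apply: (Rmult_lt_reg_r _ _ _ c_pos);
  rewrite /Rdiv Rmult_assoc Rinv_l ?Rmult_1_r; lra.
Qed.

Lemma ln_succ_le x d : 0 <= x -> 0 <= d -> 4 <= d * d * x -> ln (x + 1) <= d * x.
Proof.
move=> x_ge0 d_ge0 Hdx; have dx_ge0 : 0 <= d * x by apply: Rmult_le_pos.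
(* exp (d x) >= (1 + d x / 2) ^ 2 >= 1 + x *)
have Eexp : exp (d * x) = exp (d * x / 2) * exp (d * x / 2).
  by rewrite -exp_plus; congr exp; field.
have Hsq : (1 + d * x / 2) * (1 + d * x / 2) <= exp (d * x / 2) * exp (d * x / 2).
  by have := exp_ineq1_le (d * x / 2); move=> ?; apply: Rmult_le_compat; lra.
have : x + 1 <= exp (d * x) by rewrite Eexp; nra.
by move/(ln_le (_ : 0 < x + 1)); rewrite ln_exp; apply; lra.
Qed.

Section RootApproximation.
Variables (q : nat) (Rs : R).
Hypotheses (q_gt1 : (1 < q)%N) (Rs_bd : / 2 < Rs < 1).
Hypothesis exponent_Rs : card_S_exponent q Rs = ln 2.

(* Take m / n = a / c just below Rs and scale (a, c) by t; the exponent gap at a / c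
   eventually beats ln (n + 1). *)
Lemma exists_scheme_params L : L < Rs -> exists n m : nat,
  [/\ (0 < n)%N, (m <= n)%N, (n <= 2 * m)%N,
      ('C(2 * n - 2 * m, n - m) * 2 ^ (2 * m - n) <= 'C(n, m) * q ^ (n - m))%N &
      L < INR m / INR n].
Proof.
move=> L_lt; set L' := Rmax L (/ 2).
have L_le : L <= L' by apply: Rmax_l.
have L'_bd : / 2 <= L' < Rs by split; [apply: Rmax_r | apply: Rmax_lub_lt; lra].
have [a [c [c_gt0 [a_gt a_lt]]]] : exists a c : nat, (0 < c)%N /\ L' < INR a / INR c < Rs.
  by apply: exists_ratio_between; lra.
have c_pos : 0 < INR c by apply: lt_0_INR; apply/ltP.
have a_eq : INR a = INR a / INR c * INR c by field; lra.
set al := INR a / INR c in a_gt a_lt a_eq.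
have a_lt_c : (a < c)%N by apply/ltP/INR_lt; rewrite a_eq; nra.
have c_lt_2a : (c < 2 * a)%N.
  by apply/ltP/INR_lt; rewrite mult_INR a_eq /=; nra.
set d := card_S_exponent q al - ln 2.
have d_gt0 : 0 < d.
  have al_ge : / 2 <= al by lra.
  by rewrite /d -exponent_Rs; have := card_S_exponent_lt q_gt1 al_ge a_lt (proj2 Rs_bd); lra.
have [t Ht] := INR_archimed (d * d) 4 ltac:(nra).
have t_pos : 0 < INR t by have := pos_INR t; nra.
have c_ge1 : 1 <= INR c by have : (1 <= c)%N by []; move/leP/le_INR.
have le_at : (a * t <= c * t)%N by rewrite leq_mul2r (ltnW a_lt_c) orbT.
have le_ct : (c * t <= 2 * (a * t))%N by rewrite mulnA leq_mul2r (ltnW c_lt_2a) orbT.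
exists (c * t)%N, (a * t)%N; split=> //.
- by rewrite muln_gt0 c_gt0; apply/ltP/INR_lt.
- apply: leq_trans (preimage_max_le_pow2 le_at le_ct) _.
  apply: (@pow2_le_card_S _ _ _ al) => //; first exact: ltnW.
  + lra.
  + by rewrite !mult_INR a_eq; ring.
  + by rewrite -/d mult_INR [X in _ <= X]Rmult_comm; apply: ln_succ_le; nra.
- have -> : INR (a * t) / INR (c * t) = al by rewrite !mult_INR /al; field; split; lra.
  lra.
Qed.

End RootApproximation.

Lemma scheme_sum_rate q n m B : (1 < q)%N -> (0 < n)%N -> (0 < B)%N ->
  (m <= n)%N -> (n <= 2 * m)%N ->
  ('C(2 * n - 2 * m, n - m) * 2 ^ (2 * m - n) <= 'C(n, m) * q ^ (n - m))%N ->
  sum_rates q (INR (B * m) / INR (scheme_len q n m B)).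
Proof.
move=> q_gt1 n_gt0 B_gt0 m_le_n n_le_2m Hcond.
have code := scheme_fb_code (@index_rule_valid q n m) m_le_n n_le_2m Hcond
               (digits_rule_valid q_gt1) q_gt1 B_gt0.
have N_gt0 : (0 < scheme_len q n m B)%N.
  by rewrite /scheme_len; have := muln_gt0 B n; rewrite B_gt0 n_gt0; lia.
have N_pos : 0 < INR (scheme_len q n m B) by apply: lt_0_INR; apply/ltP.
set r := INR (B * m) / _.
exists r, r; split; last by field.
move=> eps eps_gt0; exists r, r; split; last by rewrite Rminus_diag Rabs_R0.
exists (q ^ (B * m))%N, (q ^ (B * m))%N, (scheme_len q n m B).
have Er : INR (scheme_len q n m B) * r = logq q (q ^ (B * m)).
  rewrite /logq INR_expn ln_pow; last by apply: lt_0_INR; apply/ltP; exact: ltnW.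
  by rewrite /r; field; split; [have := ln_nat_gt0 q_gt1|]; lra.
by do !split=> //; right.
Qed.

Lemma size_outs q M1 M2 (e1 : nat -> 'I_M1 -> seq (out q) -> 'I_q)
  (e2 : nat -> 'I_M2 -> seq (out q) -> 'I_q) k w1 w2 : size (outs e1 e2 k w1 w2) = k.
Proof. by elim: k => [|k IH] //=; rewrite size_rcons IH. Qed.

Lemma fb_code_card q M1 M2 N : fb_code q M1 M2 N ->
  [/\ (0 < M1)%N, (0 < M2)%N & (M1 * M2 <= #|{: out q}| ^ N)%N].
Proof.
case=> e1 [e2 [dec decK]]; have [w1 w2] := dec [::].
split; [exact: leq_ltn_trans (ltn_ord w1) | exact: leq_ltn_trans (ltn_ord w2) |].
pose f (w : 'I_M1 * 'I_M2) : N.-tuple (out q) :=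
  insubd [tuple of nseq N set0] (outs e1 e2 N w.1 w.2).
have f_inj : injective f.
  move=> [a b] [c d] /(congr1 val); rewrite /f !val_insubd !size_outs eqxx /= => E.
  by rewrite -(decK a b) -(decK c d) E.
by have := leq_card f f_inj; rewrite card_prod !card_ord card_tuple.
Qed.

Lemma achievable_sum_le q a b : (1 < q)%N -> achievable q a b -> a + b <= logq q #|{: out q}|.
Proof.
move=> q_gt1 [M1 [M2 [N [N_gt0 [/fb_code_card[M1_gt0 M2_gt0 Hcard] [Ha Hb]]]]]].
have lnq_pos := ln_nat_gt0 q_gt1.
have N_pos : 0 < INR N by apply: lt_0_INR; apply/ltP.
have M1_pos : 0 < INR M1 by apply: lt_0_INR; apply/ltP.
have M2_pos : 0 < INR M2 by apply: lt_0_INR; apply/ltP.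
have K_pos : 0 < INR #|{: out q}|.
  by have /ltP/lt_0_INR : (0 < #|{: out q}|)%N by apply/card_gt0P; exists set0.
have Hln : ln (INR M1) + ln (INR M2) <= INR N * ln (INR #|{: out q}|).
  rewrite -ln_mult // -ln_pow //; apply: ln_le; first exact: Rmult_lt_0_compat.
  by rewrite -mult_INR -INR_expn; apply: le_INR; apply/leP.
apply: (Rmult_le_reg_l _ _ _ N_pos); rewrite Rmult_plus_distr_l.
apply: Rle_trans (Rplus_le_compat _ _ _ _ Ha Hb) _; rewrite /logq.
rewrite (_ : INR N * _ = INR N * ln (INR #|{: out q}|) / ln (INR q)); last by field; lra.
rewrite -Rdiv_plus_distr; apply: Rmult_le_compat_r => //; left; exact: Rinv_0_lt_compat.
Qed.

Lemma sum_rates_le q x : (1 < q)%N -> sum_rates q x -> x <= logq q #|{: out q}| / 2.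
Proof.
move=> q_gt1 [R1 [R2 [HO ->]]].
apply: Rmult_le_compat_r; first lra.
apply: Rnot_lt_le => lt_K.
have [a [b [Hab [/Rabs_def2 Ha /Rabs_def2 Hb]]]] :=
  HO ((R1 + R2 - logq q #|{: out q}|) / 2) ltac:(lra).
have := achievable_sum_le q_gt1 Hab; lra.
Qed.

Lemma exists_ratio_gt a b c L : 0 < b -> 0 <= c -> L < a / b ->
  exists B : nat, (0 < B)%N /\ L < INR B * a / (INR B * b + c).
Proof.
move=> b_gt0 c_ge0 L_lt; have gap : 0 < a - L * b.
  by move: L_lt; rewrite /Rdiv => /(Rmult_lt_compat_r _ _ _ b_gt0); rewrite Rmult_assoc Rinv_l; lra.
have [B HB] := INR_archimed (a - L * b) (Rabs L * c) gap.
have B1_pos : 0 < INR B.+1 by apply: lt_0_INR; apply/ltP.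
have den_pos : 0 < INR B.+1 * b + c by nra.
exists B.+1; split=> //; apply: (Rmult_lt_reg_r _ _ _ den_pos).
rewrite /Rdiv Rmult_assoc Rinv_l ?Rmult_1_r; last lra.
have := Rle_abs L; have := pos_INR B; rewrite S_INR in B1_pos den_pos *; nra.
Qed.

Lemma exists_sum_rate_gt q Rs L : (1 < q)%N -> / 2 < Rs < 1 -> card_S_exponent q Rs = ln 2 ->
  L < Rs -> exists x, sum_rates q x /\ L < x.
Proof.
move=> q_gt1 Rs_bd exponent_Rs /(exists_scheme_params q_gt1 Rs_bd exponent_Rs).
case=> n [m [n_gt0 m_le_n n_le_2m Hcond L_lt]].
have n_pos : 0 < INR n by apply: lt_0_INR; apply/ltP.
have [B [B_gt0 L_lt_B]] := exists_ratio_gt n_pos (pos_INR ((n - m) + up_log q 'C(n, m))) L_lt.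
exists (INR (B * m) / INR (scheme_len q n m B)); split; first exact: scheme_sum_rate.
by rewrite /scheme_len -addnA plus_INR !mult_INR.
Qed.

Theorem ROf_ge_entropy_root q Rs : (1 < q)%N -> 1 / 2 < Rs <= 1 ->
  Hb Rs + (1 - Rs) * (ln (INR q) / ln 2) = 1 -> ROf_ge q Rs.
Proof.
move=> q_gt1 [Rs_gt Rs_le] root.
have ln2_pos : 0 < ln 2 by have := ln_lt_2; lra.
have exponent_Rs : card_S_exponent q Rs = ln 2.
  rewrite -[RHS]Rmult_1_r -root /card_S_exponent /neg_entropy /Hb; field; lra.
have Rs_lt1 : Rs < 1.
  case: Rs_le => // Rs1; move: root; rewrite Rs1 /Hb ln_1 Rminus_diag.
  by rewrite /Rdiv !(Rmult_0_l, Rmult_0_r); lra.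
have Rs_bd : / 2 < Rs < 1 by lra.
have bounded : bound (sum_rates q).
  by exists (logq q #|{: out q}| / 2) => x; apply: sum_rates_le.
have [x0 [Hx0 _]] := exists_sum_rate_gt q_gt1 Rs_bd exponent_Rs (ltac:(lra) : 0 < Rs).
have [s [s_ub s_lub]] := completeness _ bounded (ex_intro _ _ Hx0).
exists s; split=> //; apply: Rnot_lt_le => s_lt.
have [x [Hx s_lt_x]] := exists_sum_rate_gt q_gt1 Rs_bd exponent_Rs s_lt.
by have := s_ub x Hx; lra.
Qed.

Theorem theorem6 (q n m : nat) :
  (1 < q)%N -> (n <= 2 * m)%N -> (m <= n)%N ->
  ('C(2 * n - 2 * m, n - m) * 2 ^ (2 * m - n) <= 'C(n, m) * q ^ (n - m))%N ->
  (forall (rule : nat -> seq (seq (dpair q)) -> seq (dpair q) ->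
                  seq (option 'I_q))
          (frule : seq (seq (dpair q)) -> seq (dpair q) -> seq 'I_q),
     valid_rule n m rule -> valid_frule frule ->
     forall B : nat, (0 < B)%N ->
       (* the indexing of U(b) by S is always possible *)
       (forall (w1 w2 : (B * m).-tuple 'I_q) (b : nat), (b < B)%N ->
          (size (cand m rule b (zip w1 w2)) <= 'C(n, m) * q ^ (n - m))%N) /\
       (* zero-error decoding *)
       (exists dec : seq (out q) -> (B * m).-tuple 'I_q * (B * m).-tuple 'I_q,
          forall w1 w2 : (B * m).-tuple 'I_q,
            dec (full m rule frule B (zip w1 w2)) = (w1, w2)) /\
       (* number of channel uses *)
       (forall w1 w2 : (B * m).-tuple 'I_q,
          (size (full m rule frule B (zip w1 w2))
             <= B * n + (n - m) + up_log q 'C(n, m))%N)) /\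
  (forall Rs : R, (1 / 2 < Rs <= 1) ->
     (Hb Rs + (1 - Rs) * (ln (INR q) / ln 2) = 1) ->
     ROf_ge q Rs).
Proof.
move=> q_gt1 n_le_2m m_le_n Hcond.
split=> [rule frule rule_valid frule_valid B B_gt0|Rs]; last exact: ROf_ge_entropy_root.
have size_v (w1 w2 : (B * m).-tuple 'I_q) : size (zip w1 w2) = (B * m)%N.
  exact: size_zip_tuple.
split; [|split] => [w1 w2 b lt_bB||w1 w2].
- apply: (cand_le_card_S rule_valid m_le_n n_le_2m Hcond).
  by rewrite size_v leq_mul2r ltnW ?orbT.
- exact: (full_decodable rule_valid m_le_n n_le_2m Hcond frule_valid q_gt1).
- exact: (size_full_le rule_valid m_le_n n_le_2m Hcond frule_valid q_gt1 B_gt0).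
Qed.
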